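(* Let $q=p^h$ be a prime power and let $G$ be a finite group whose irreducible complex character degrees, with multiplicity, are $1$ ($q-1$ times), $q-1$ (once), and $q$ ($q-1$ times). Then the irreducible character degrees of the derived subgroup $G'$ are $1$ ($q$ times) and $q$ (once). Furthermore, $G''$ is abelian of order $q+1$. *)

From HB Require Import structures.
From mathcomp Require Import all_boot all_order all_algebra all_fingroup all_solvable all_field all_character.
Set Implicit Arguments. Unset Strict Implicit. Unset Printing Implicit Defensive.
Import GRing.Theory Num.Theory.
Local Open Scope ring_scope.

Definition irr_degrees (gT : finGroupType) (G : {group gT}) : seq algC :=
  [seq 'chi[G]_i 1%g | i : Iirr G].

From HB Require Import structures.
From mathcomp Require Import all_boot all_order all_algebra all_fingroup all_solvable all_field all_character.
From mathcomp Require Import zify.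
Set Implicit Arguments. Unset Strict Implicit. Unset Printing Implicit Defensive.
Import Order.TTheory GRing.Theory Num.Theory.

(* Write q = p ^ h and N = G'.  Counting linear characters and summing squared
   degrees give |G : N| = q - 1 and |N| = q (q + 1).  Let theta be the character
   of degree q - 1.  Restricting the regular character of G to N gives
   (q - 1) rho_N; since linear characters of G restrict trivially and the others
   have degree q - 1 (only theta) or q, every nontrivial psi in Irr(N) satisfies
   (q - 1) psi(1) = (q - 1) [theta_N, psi]  (mod q).
   Hence a constituent psi of theta_N has psi(1) = [theta_N, psi], so the squared
   degrees of these constituents add up to theta(1) = q - 1, while every other
   nontrivial psi has degree divisible by q; as the squared degrees of Irr(N) add
   up to q (q + 1), exactly one such psi remains, of degree q.  By Clifford theory
   the constituents of theta_N share one degree, which divides q - 1 and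
   q (q + 1), hence 2; degree 2 would make N perfect of order 2 * odd, which the
   sign of its regular permutation representation forbids.  So N has q linear
   characters and one of degree q, whence |N'| = q + 1, and N' is abelian since
   each of its irreducible degrees divides q + 1 and one of the degrees 1, q of N. *)

Lemma perm_nseq_cat1 (T : eqType) (s : seq T) a b n :
  a != b -> {subset s <= [:: a; b]} -> count_mem a s = n -> count_mem b s = 1 ->
  perm_eq s (nseq n a ++ [:: b]).
Proof.
move=> neq_ab s_ab ca cb; set t := nseq n a ++ _.
have t_ab : {subset t <= [:: a; b]}.
  by move=> x; rewrite mem_cat mem_nseq !inE => /orP[/andP[_ ->] | ->]; rewrite ?orbT.
have count_ab x : x \in [:: a; b] -> count_mem x s = count_mem x t.
  rewrite count_cat count_nseq /= !inE => /orP[]/eqP->.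
    by rewrite ca eqxx eq_sym (negbTE neq_ab) mul1n !addn0.
  by rewrite cb eqxx (negbTE neq_ab) mul0n.
by apply/allP => x; rewrite mem_cat => /orP[/s_ab | /t_ab] /count_ab /eqP.
Qed.

Lemma dvdn_pred_mulr q n : 0 < q -> (q %| (q - 1) * n) = (q %| n).
Proof. by case: q => // q _; rewrite subn1 Gauss_dvdr // coprimeSn. Qed.

Lemma predn_mul_congr_inj q a b m :
  1 < q -> a < q -> (q - 1) * a = (q - 1) * b + q * m -> a = b.
Proof.
move=> q_gt1 a_lt_q e; have b_le_a : b <= a.
  by rewrite -(@leq_pmul2l (q - 1)) ?subn_gt0 // e leq_addr.
have dvd_q : q %| a - b by rewrite -dvdn_pred_mulr 1?ltnW // mulnBr e addKn dvdn_mulr.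
have [ab0 | ab_gt0] := posnP (a - b); first lia.
have := dvdn_leq ab_gt0 dvd_q; lia.
Qed.

Section RegularSign.

Variable T : finGroupType.
Local Open Scope group_scope.

Lemma odd_perm_actpermR (x : T) :
  odd_perm (actperm 'R x) = odd #|T| (+) odd #|[set: T] : <[x]>|.
Proof.
rewrite /odd_perm -card_lcosets.
suff -> : porbits (actperm 'R x) = lcosets <[x]> [set: T] by [].
apply/setP => A; apply/imsetP/imsetP => -[y _ ->]; exists y => //;
  by apply/setP => u; rewrite porbit_actperm ?inE // orbitR.
Qed.

Lemma der1_actpermR_even x : x \in [set: T]^`(1) -> ~~ odd_perm (actperm 'R x).
Proof.
move=> T'x; rewrite -Alt_even.
have abel_sign : abelian (@odd_perm T @* (actperm 'R @* [set: T])).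
  by apply/centsP => a _ b _; case: a; case: b.
have : (actperm 'R @* [set: T])^`(1) \subset 'Alt_T.
  rewrite ker_trivg_morphim subsetT /= morphim_der ?subsetT //.
  by move/derG1P: abel_sign => ->.
rewrite -morphim_der // => /subsetP; apply; exact: mem_morphim.
Qed.

End RegularSign.

Lemma der1_proper_card_2odd (gT : finGroupType) (G : {group gT}) m :
  #|G| = (2 * m)%N -> odd m -> (G^`(1) \proper G)%g.
Proof.
(* An involution z acts on [subg G] by right multiplication as m disjoint
   transpositions, hence as an odd permutation. *)
move=> oG odd_m; have oT : #|[subg G]%g| = (2 * m)%N by rewrite -(card_isog (isog_subg G)).
have [z _ oz] : {z | z \in [subg G]%g & #[z]%g = 2}.
  by apply: Cauchy; rewrite ?oT ?dvdn_mulr.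
have indexT : #|[subg G] : <[z]>|%g = m.
  by apply/eqP; rewrite -(eqn_pmul2l (isT : 0 < 2)) -{1}oz Lagrange ?subsetT // oT.
have odd_z : odd_perm (actperm 'R z) by rewrite odd_perm_actpermR -cardsT oT indexT oddM.
have T'z : z \notin [subg G]^`(1)%g by apply: contraL odd_z; apply: der1_actpermR_even.
have properT : ([subg G]^`(1) \proper [subg G])%g.
  by rewrite properEneq der_sub andbT; apply: contraNneq T'z => ->; rewrite inE.
rewrite properEcard der_sub (card_isog (isog_der 1 (isog_subg G))).
by rewrite (card_isog (isog_subg G)) proper_card.
Qed.

Local Open Scope ring_scope.

Section IrrDegrees.

Variables (gT : finGroupType) (H : {group gT}).

Lemma count_irr_degrees (x : algC) :
  count_mem x (irr_degrees H) = #|[pred i : Iirr H | 'chi_i 1%g == x]|.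
Proof.
rewrite /irr_degrees count_map cardE /enum_mem size_filter count_filter.
by apply: eq_count => i; rewrite !inE andbT.
Qed.

Lemma irr1_mem_irr_degrees (i : Iirr H) : 'chi_i 1%g \in irr_degrees H.
Proof. by apply: map_f; rewrite mem_enum. Qed.

Lemma sum_irr_degrees_sq : \sum_(x <- irr_degrees H) x ^+ 2 = #|H|%:R.
Proof. by rewrite -irr_sum_square big_image. Qed.

Lemma cfRes_der1_lin (i : Iirr H) : 'chi_i 1%g = 1 -> 'Res[H^`(1)] 'chi_i = 1.
Proof.
move=> chi1; rewrite cfRes_sub_ker ?chi1 ?scale1r //.
by apply: lin_char_der1; rewrite qualifE /= irr_char chi1 eqxx.
Qed.

Lemma cfdot_Res_cfReg (K : {group gT}) (k : Iirr K) : K \subset H ->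
  '['Res[K] (cfReg H), 'chi_k] = #|H : K|%g%:R * 'chi_k 1%g.
Proof.
move=> sKH; have -> : 'Res[K] (cfReg H) = #|H : K|%g%:R *: cfReg K.
  apply/cfun_inP => x Kx; rewrite cfResE // !cfunE !cfuniE ?normal1 // inE.
  by case: (x == 1%g); rewrite ?mulr0 // !mulr1 -natrM mulnC Lagrange.
rewrite cfdotZl cfReg_sum cfdot_suml (bigD1 k) //= cfdotZl cfdot_irr eqxx mulr1.
by rewrite big1 ?addr0 // => i ne_ik; rewrite cfdotZl cfdot_irr (negbTE ne_ik) mulr0.
Qed.

End IrrDegrees.

Lemma constt_Res_irr1_eq (gT : finGroupType) (H K : {group gT}) (i : Iirr H) (j k : Iirr K) :
  (K <| H)%g -> j \in irr_constt ('Res[K] 'chi_i) -> k \in irr_constt ('Res[K] 'chi_i) ->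
  'chi_j 1%g = 'chi_k 1%g.
Proof.
move=> nsKH Sj; rewrite irr_consttE (Clifford_Res_sum_cfclass nsKH Sj) cfdotZl.
rewrite cfdot_suml mulf_eq0 negb_or => /andP[_]; apply: contraNeq => ne_jk.
rewrite big_seq big1 // => _ /cfclassP[y Hy ->].
rewrite -conjg_IirrE cfdot_irr; case: eqP => // jyk; case/eqP: ne_jk.
by rewrite -jyk conjg_IirrE cfConjg1.
Qed.

Lemma perm_irr_degrees_1q (gT : finGroupType) (H : {group gT}) q :
  (1 < q)%N -> (forall k : Iirr H, 'chi_k 1%g = 1 \/ 'chi_k 1%g = q%:R) ->
  #|[pred k : Iirr H | 'chi_k 1%g == q%:R]| = 1%N -> #|H| = (q * q.+1)%N ->
  perm_eq (irr_degrees H) (nseq q 1 ++ [:: q%:R]).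
Proof.
move=> q_gt1 irr1_1q card_q oH; have q_neq1 : (1 : algC) != q%:R.
  by rewrite eq_sym pnatr_eq1 gtn_eqF.
have card_lin : #|[pred k : Iirr H | 'chi_k 1%g == 1]| = q.
  have := irr_sum_square H; rewrite (bigID [pred k | 'chi_k 1%g == q%:R]) /=.
  rewrite [X in X + _](eq_bigr (fun _ => q%:R ^+ 2)) => [|k /eqP-> //].
  rewrite [X in _ + X](eq_bigr (fun _ => 1)) => [|k]; last first.
    by case: (irr1_1q k) => ->; rewrite ?expr1n ?eqxx.
  rewrite !sumr_const card_q -(eq_card (A := [pred k | 'chi_k 1%g == 1])); last first.
    move=> k; change (('chi_k 1%g == 1) = ('chi_k 1%g != q%:R)).
    by case: (irr1_1q k) => ->; rewrite eqxx ?q_neq1 // eq_sym (negbTE q_neq1).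
  rewrite mulr1n -natrX -natrD oH => /eqP; rewrite eqr_nat.
  by rewrite mulnS mulnn addnC eqn_add2r => /eqP.
apply: perm_nseq_cat1 => //.
- by move=> _ /mapP[k _ ->]; rewrite !inE; case: (irr1_1q k) => ->; rewrite eqxx ?orbT.
- by rewrite count_irr_degrees.
by rewrite count_irr_degrees.
Qed.

Section DegreesOneAndQ.

Variables (gT : finGroupType) (H : {group gT}) (q : nat).
Hypothesis q_gt1 : (1 < q)%N.
Hypothesis irr_degreesH : perm_eq (irr_degrees H) (nseq q 1 ++ [:: q%:R]).

Let irr1_1q (k : Iirr H) : 'chi_k 1%g = 1 \/ 'chi_k 1%g = q%:R.
Proof.
have := irr1_mem_irr_degrees k; rewrite (perm_mem irr_degreesH) mem_cat mem_nseq !inE.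
by case/orP=> [/andP[_ /eqP] | /eqP]; [left | right].
Qed.

Let indexg_der1_1q : #|H : H^`(1)|%g = q.
Proof.
rewrite -card_lin_irr -(eq_card (A := [pred k | 'chi_k 1%g == 1])); last first.
  by move=> k; rewrite !inE qualifE /= irr_char.
rewrite -count_irr_degrees (seq.permP irr_degreesH) count_cat count_nseq /=.
by rewrite eqxx mul1n pnatr_eq1 gtn_eqF ?addn0.
Qed.

Let card_1q : #|H| = (q * q.+1)%N.
Proof.
apply/eqP; rewrite -(eqr_nat algC) -sum_irr_degrees_sq (perm_big _ irr_degreesH) /=.
rewrite big_cat big_nseq big_seq1 iter_addr_0 expr1n /= -natrX -natrD eqr_nat.
by rewrite mulnS mulnn.
Qed.

Lemma card_der1_1q : #|H^`(1)%g| = q.+1.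
Proof.
apply/eqP; rewrite -(eqn_pmul2l (ltnW q_gt1)) -{1}indexg_der1_1q mulnC Lagrange ?der_sub //.
by rewrite card_1q.
Qed.

Lemma abelian_der1_1q : abelian H^`(1)%g.
Proof.
apply/char_abelianP => j; rewrite qualifE /= irr_char /=.
have [k] := constt_cfInd_irr j (der_sub 1 H); rewrite constt_Ind_Res => /=.
move=> /(dvdn_constt_Res1_irr1 (der_normal 1 H))[n chik1].
have /natrP[d chij1] := Cnat_irr1 j.
have dvd_d_card : (d %| q.+1)%N.
  by have := dvd_irr1_cardG j; rewrite chij1 card_der1_1q dvdC_nat.
rewrite chij1 pnatr_eq1; case: (irr1_1q k); rewrite chik1 chij1 -natrM.
  by move/eqP; rewrite pnatr_eq1 muln_eq1 => /andP[_].
move/eqP; rewrite eqr_nat => /eqP q_nd; rewrite -dvdn1 -(subSnn q).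
by rewrite dvdn_sub // -q_nd dvdn_mull.
Qed.

End DegreesOneAndQ.

Section DegreePattern.

Variables (gT : finGroupType) (G : {group gT}) (q : nat).
Hypothesis q_gt2 : (2 < q)%N.
Hypothesis irr_degreesG :
  perm_eq (irr_degrees G) (nseq (q - 1) 1 ++ [:: (q - 1)%:R] ++ nseq (q - 1) q%:R).

Local Notation N := (G^`(1))%G.

Let nsNG : (N <| G)%g := der_normal 1 G.
Let q_gt0 : (0 < q)%N := ltnW (ltnW q_gt2).
Let predq_gt0 : (0 < q - 1)%N. Proof. by rewrite subn_gt0 ltnW. Qed.

Let predq_neq1 : (q - 1)%:R != 1 :> algC.
Proof. by rewrite pnatr_eq1; apply/eqP; lia. Qed.
Let q_neq1 : q%:R != 1 :> algC.
Proof. by rewrite pnatr_eq1; apply/eqP; lia. Qed.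
Let q_neq_predq : q%:R != (q - 1)%:R :> algC.
Proof. by rewrite eqr_nat; apply/eqP; lia. Qed.

Lemma irr1_cases (i : Iirr G) :
  [\/ 'chi_i 1%g = 1, 'chi_i 1%g = (q - 1)%:R | 'chi_i 1%g = q%:R].
Proof.
have := irr1_mem_irr_degrees i; rewrite (perm_mem irr_degreesG) !mem_cat !mem_nseq !inE.
case/or3P=> [/andP[_ /eqP] | /eqP | /andP[_ /eqP]] ->;
  by [constructor 1 | constructor 2 | constructor 3].
Qed.

Let card_irr1 (x : algC) : #|[pred i : Iirr G | 'chi_i 1%g == x]| =
  count_mem x (nseq (q - 1) 1 ++ [:: (q - 1)%:R] ++ nseq (q - 1) q%:R).
Proof. by rewrite -count_irr_degrees (seq.permP irr_degreesG). Qed.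

Lemma indexg_der1 : #|G : N|%g = (q - 1)%N.
Proof.
rewrite -card_lin_irr -(eq_card (A := [pred i | 'chi_i 1%g == 1])); last first.
  by move=> i; rewrite !inE qualifE /= irr_char.
rewrite card_irr1 !count_cat !count_nseq /= eqxx (negbTE predq_neq1) (negbTE q_neq1).
by rewrite mul1n mul0n !addn0.
Qed.

Lemma card_der1 : #|N| = (q * q.+1)%N.
Proof.
have oG : #|G| = ((q - 1) * (q * q.+1))%N.
  apply/eqP; rewrite -(eqr_nat algC) -sum_irr_degrees_sq (perm_big _ irr_degreesG) /=.
  rewrite !big_cat big_cons !big_nseq !iter_addr_0 /= expr1n -!natrX.
  rewrite -[X in _ + (_ + X)]mulr_natr -natrM -!natrD eqr_nat.
  by apply/eqP; nia.
apply/eqP; rewrite -(eqn_pmul2l predq_gt0) -{1}indexg_der1 mulnC Lagrange ?der_sub //.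
by rewrite oG.
Qed.

Lemma exists_irr1_pred : exists th : Iirr G, forall i, ('chi_i 1%g == (q - 1)%:R) = (i == th).
Proof.
have /card1P[th def_th] : #|[pred i : Iirr G | 'chi_i 1%g == (q - 1)%:R]| == 1%N.
  rewrite card_irr1 !count_cat !count_nseq /= eqxx [1 == _]eq_sym.
  by rewrite (negbTE predq_neq1) (negbTE q_neq_predq).
by exists th => i; have := def_th i; rewrite !inE.
Qed.

Section Constituents.

Variable th : Iirr G.
Hypothesis irr1_pred_th : forall i, ('chi_i 1%g == (q - 1)%:R) = (i == th).

Local Notation S := (irr_constt ('Res[N] 'chi_th)).

Let th1 : 'chi_th 1%g = (q - 1)%:R.
Proof. by apply/eqP; rewrite irr1_pred_th. Qed.

Let Nat_cfdot_Res (i : Iirr G) (k : Iirr N) : '['Res[N] 'chi_i, 'chi_k] \in Num.nat.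
Proof. by rewrite Cnat_cfdot_char_irr // cfRes_char ?irr_char. Qed.

Lemma irr1_congruence (k : Iirr N) : k != 0 -> exists m : nat,
  (q - 1)%:R * 'chi_k 1%g = (q - 1)%:R * '['Res[N] 'chi_th, 'chi_k] + q%:R * m%:R.
Proof.
move=> nz_k; have := cfdot_Res_cfReg k (der_sub 1 G); rewrite indexg_der1 => <-.
rewrite cfdot_Res_l cfReg_sum cfdot_suml (bigD1 th) //= cfdotZl -cfdot_Res_l th1.
have -> : \sum_(i | i != th) '['chi_i 1%g *: 'chi_i, 'Ind[G] 'chi_k]
        = q%:R * \sum_(i | i != th) '['Res[N] 'chi_i, 'chi_k].
  rewrite mulr_sumr; apply: eq_bigr => i ne_i_th; rewrite cfdotZl -cfdot_Res_l.
  case: (irr1_cases i) => [lin_i | /eqP | -> //].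
    by rewrite cfRes_der1_lin // -irr0 cfdot_irr eq_sym (negbTE nz_k) !mulr0.
  by rewrite irr1_pred_th (negbTE ne_i_th).
have /natrP[m ->] : \sum_(i | i != th) '['Res[N] 'chi_i, 'chi_k] \in Num.nat.
  by apply: rpred_sum => i _.
by exists m.
Qed.

Lemma constt0_notin : 0 \notin S.
Proof.
apply/negP => /(constt0_Res_cfker nsNG); rewrite -lin_irr_der1 => /lin_char1 th_lin.
by move: predq_neq1; rewrite -th1 th_lin eqxx.
Qed.

Lemma constt_irr1 k : k \in S -> 'chi_k 1%g = '['Res[N] 'chi_th, 'chi_k].
Proof.
move=> Sk; have nz_k : k != 0 by apply: contraNneq constt0_notin => <-.
have /natrP[a chik1] := Cnat_irr1 k; have /natrP[b mult_k] := Nat_cfdot_Res th k.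
have a_lt_q : (a < q)%N.
  have [n] := dvdn_constt_Res1_irr1 nsNG Sk.
  rewrite th1 chik1 -natrM => /eqP; rewrite eqr_nat => /eqP.
  case: n => [|n]; first by rewrite mul0n; lia.
  by have := leq_pmull a (ltn0Sn n); lia.
have [m] := irr1_congruence nz_k; rewrite chik1 mult_k -!natrM -natrD => /eqP.
by rewrite eqr_nat => /eqP /(predn_mul_congr_inj (ltnW q_gt2) a_lt_q) ->.
Qed.

Lemma nonconstt_irr1 k : k != 0 -> k \notin S -> exists c, 'chi_k 1%g = (q * c.+1)%:R.
Proof.
move=> nz_k notSk; have [m] := irr1_congruence nz_k.
move: notSk; rewrite irr_consttE negbK => /eqP ->; rewrite mulr0 add0r.
have /natrP[a chik1] := Cnat_irr1 k; rewrite chik1 -!natrM => /eqP; rewrite eqr_nat => /eqP e.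
have /dvdnP[[|c] a_eq] : (q %| a)%N by rewrite -(dvdn_pred_mulr _ q_gt0) e dvdn_mulr.
  by have := irr1_gt0 k; rewrite chik1 a_eq ltr0n.
by exists c; rewrite a_eq mulnC.
Qed.

Lemma sum_constt_irr1_sq : \sum_(k in S) 'chi_k 1%g ^+ 2 = (q - 1)%:R.
Proof.
transitivity (\sum_k '['Res[N] 'chi_th, 'chi_k] * 'chi_k 1%g).
  rewrite [RHS](bigID [pred k | k \in S]) /= [X in _ + X]big1 ?addr0 => [|k].
    by apply: eq_bigr => k Sk; rewrite -constt_irr1.
  by rewrite irr_consttE negbK => /eqP->; rewrite mul0r.
rewrite -th1 -(cfRes1 N) [in RHS](cfun_sum_cfdot ('Res[N] 'chi_th)) sum_cfunE.
by apply: eq_bigr => k _; rewrite cfunE.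
Qed.

Local Notation R := [pred k : Iirr N | (k != 0) && (k \notin S)].

Lemma sum_nonconstt_irr1_sq : \sum_(k in R) 'chi_k 1%g ^+ 2 = (q * q)%:R.
Proof.
have := irr_sum_square N; rewrite card_der1 (bigD1 0) //= irr0 cfun11 expr1n.
rewrite (bigID [pred k | k \in S]) /= (eq_bigl [pred k | k \in S]) => [|k]; last first.
  by rewrite andbC andb_idr // => Sk; apply: contraNneq constt0_notin => <-.
by rewrite sum_constt_irr1_sq addrA nat1r subn1 prednK // mulnS natrD => /addrI.
Qed.

Lemma nonconstt_irr1_q k : k \in R -> 'chi_k 1%g = q%:R.
Proof.
move=> Rk; have /andP[nz_k notSk] := Rk; have [c chik1] := nonconstt_irr1 nz_k notSk.
have : 'chi_k 1%g ^+ 2 <= (q * q)%:R.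
  rewrite -sum_nonconstt_irr1_sq (bigD1 k) //= lerDl.
  by apply: sumr_ge0 => i _; rewrite exprn_ge0 // ltW // irr1_gt0.
rewrite chik1 -natrX ler_nat; case: c {chik1} => [|c]; rewrite ?muln1 // => le_sq.
by exfalso; nia.
Qed.

Lemma card_nonconstt : #|R| = 1%N.
Proof.
have := sum_nonconstt_irr1_sq; rewrite (eq_bigr (fun _ => (q * q)%:R)) => [|k Rk]; last first.
  by rewrite nonconstt_irr1_q // -natrX mulnn.
rewrite sumr_const -mulrnA => /eqP; rewrite eqr_nat -{2}[(q * q)%N]muln1.
by rewrite eqn_pmul2l ?muln_gt0 ?q_gt0 // => /eqP.
Qed.

Lemma constt_irr1_dvd2 : exists2 d : nat, (d %| 2)%N & forall k, k \in S -> 'chi_k 1%g = d%:R.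
Proof.
have [j Sj] := constt_cfRes_irr N th; have /natrP[d chij1] := Cnat_irr1 j.
exists d; last by move=> k Sk; rewrite -chij1 (constt_Res_irr1_eq nsNG Sk Sj).
have dvd_predq : (d %| q - 1)%N.
  have [n] := dvdn_constt_Res1_irr1 nsNG Sj.
  by rewrite th1 chij1 -natrM => /eqP; rewrite eqr_nat => /eqP ->; apply: dvdn_mull.
have dvd_qSq : (d %| q * q.+1)%N.
  by have := dvd_irr1_cardG j; rewrite chij1 card_der1 dvdC_nat.
have -> : 2%N = (q * q.+1 - (q - 1) * q.+2)%N by clear -q_gt0; nia.
by rewrite dvdn_sub // dvdn_mulr.
Qed.

Lemma constt_irr1_neq2 : ~ (forall k, k \in S -> 'chi_k 1%g = 2%:R).
Proof.
move=> deg2; have perfectN : (N \subset N^`(1))%g.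
  rewrite -indexg_eq1 -card_lin_irr; apply/card1P; exists 0 => k.
  rewrite !inE qualifE /= irr_char.
  have [-> | nz_k] := eqVneq k 0; first by rewrite irr0 cfun11 eqxx.
  have [Sk | notSk] := boolP (k \in S); first by rewrite deg2 // pnatr_eq1.
  by rewrite nonconstt_irr1_q ?inE ?nz_k // pnatr_eq1 gtn_eqF // ltnW.
have card_S : (q - 1 = 4 * #|S|)%N.
  apply/eqP; rewrite -(eqr_nat algC) -sum_constt_irr1_sq.
  rewrite (eq_bigr (fun _ => 4%:R)) => [|k /deg2 ->]; last by rewrite -natrX.
  by rewrite sumr_const -mulrnA mulnC.
have q_eq : q = (4 * #|S|).+1 by clear -card_S q_gt0; lia.
have oN : #|N| = (2 * (q * (2 * #|S|).+1))%N.
  by rewrite card_der1 mulnCA; congr (_ * _)%N; rewrite {1}q_eq; clear; lia.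
have odd_m : odd (q * (2 * #|S|).+1) by rewrite q_eq oddM /= !oddM.
have := der1_proper_card_2odd oN odd_m.
by rewrite properE perfectN andbF.
Qed.

Lemma constt_irr1_lin k : k \in S -> 'chi_k 1%g = 1.
Proof.
move=> Sk; have [[|[|[|d]]] // _ Sdeg] := constt_irr1_dvd2; first exact: Sdeg.
by case: constt_irr1_neq2.
Qed.

Lemma der1_irr_degrees : perm_eq (irr_degrees N) (nseq q 1 ++ [:: q%:R]).
Proof.
have irr1_q k : ('chi[N]_k 1%g == q%:R) = (k \in R).
  have [-> | nz_k] := eqVneq k 0; first by rewrite irr0 cfun11 eq_sym (negbTE q_neq1) inE eqxx.
  have [Sk | notSk] := boolP (k \in S).
    by rewrite constt_irr1_lin // eq_sym (negbTE q_neq1) inE Sk andbF.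
  by rewrite nonconstt_irr1_q ?inE ?nz_k ?notSk ?eqxx.
apply: perm_irr_degrees_1q; rewrite ?card_der1 // 1?ltnW //.
  move=> k; have [Rk | notRk] := boolP (k \in R); first by right; apply: nonconstt_irr1_q.
  left; move: notRk; rewrite inE negb_and negbK => /orP[/eqP-> | Sk].
    by rewrite irr0 cfun11.
  exact: constt_irr1_lin (negbNE Sk).
by rewrite -[RHS]card_nonconstt; apply: eq_card => k; rewrite inE irr1_q.
Qed.

End Constituents.

End DegreePattern.

Theorem mainTheorem8 (gT : finGroupType) (G : {group gT}) (p h : nat)
  (hp : prime p) (hh : (0 < h)%N) (hq2 : (2 < p ^ h)%N)
  (hdeg : perm_eq (irr_degrees G)
            (nseq (p ^ h - 1) 1 ++ [:: (p ^ h - 1)%:R] ++ nseq (p ^ h - 1) (p ^ h)%:R)) :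
  perm_eq (irr_degrees (G^`(1))%G) (nseq (p ^ h) 1 ++ [:: (p ^ h)%:R])
  /\ abelian (G^`(2))%g /\ #|G^`(2)%g| = (p ^ h).+1.
Proof.
have [th irr1_pred_th] := exists_irr1_pred hq2 hdeg.
have degN := der1_irr_degrees hq2 hdeg irr1_pred_th; have q_gt1 := ltnW hq2.
by split; [|split; [apply: abelian_der1_1q degN | apply: card_der1_1q degN]].
Qed.
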